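(* Let $b\ge 1$ and $L\ge 1$ be integers. Let $A$ be the set of permutations $s\in\mathcal{S}_L$ all of whose cycles have length at most $b$, and let $B$ be the set of permutations $t\in\mathcal{S}_L$ such that there do not exist integers $i,j$ with $j\ge 0$, $j+b<i\le L$ and $t(j+k)>t(i)$ for all $k\in\{1,\ldots,b\}$. Then the map $s\mapsto \widetilde{F(s)}$ is a bijection from $A$ onto $B$. In particular $|A|=|B|$.
   Context: $\mathcal{S}_L$ denotes the set of permutations of $\{1,\ldots,L\}$; a permutation $s$ is identified with the word $s(1)s(2)\cdots s(L)$. Cycles include fixed points. The Foata correspondence $F:\mathcal{S}_L\to\mathcal{S}_L$ is defined as follows. Take the cycle decomposition of $s$ (including fixed points). Write each cycle starting with its largest element (the cycle head), i.e. the cycle with largest element $c_1$ is written $[c_1\,s(c_1)\,s^2(c_1)\cdots s^{d-1}(c_1)]$ where $d$ is its length. Order the cycles so that their cycle heads are increasing from left to right. Removing the brackets gives a word with $L$ distinct letters from $\{1,\ldots,L\}$, regarded as a permutation; this is $F(s)$. (Example: $s=359724681$ has cycles $[139][25][476][8]$, written canonically as $[52][764][8][913]$, so $F(s)=527648913$.) It is a known fact that $F$ is a bijection of $\mathcal{S}_L$. For $u\in\mathcal{S}_L$, $\tilde u\in\mathcal{S}_L$ is defined by $\tilde u(i)=L+1-u(L+1-i)$ for all $i$ (rotation of the point diagram by $180$ degrees). *)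

(* Permutations of {1..L} are modelled 0-indexed as {perm 'I_L}:
   the point k : 'I_L stands for k+1. *)
From mathcomp Require Import all_boot all_fingroup.
Set Implicit Arguments. Unset Strict Implicit. Unset Printing Implicit Defensive.

Definition cycle_heads (L : nat) (s : {perm 'I_L}) : seq 'I_L :=
  [seq c <- enum 'I_L | [forall y in porbit s c, (y <= c)%N]].

Definition foata_word (L : nat) (s : {perm 'I_L}) : seq 'I_L :=
  flatten [seq traject (fun x => s x) c #|porbit s c| | c <- cycle_heads s].

Definition foata_fun (L : nat) (s : {perm 'I_L}) (i : 'I_L) : 'I_L :=
  nth i (foata_word s) i.

(* Foata correspondence F : S_L -> S_L.  (The word is always a permutation, a
   known fact; the fallback branch is never used.) *)
Definition foata (L : nat) (s : {perm 'I_L}) : {perm 'I_L} :=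
  match injectiveP (foata_fun s) with
  | ReflectT H => perm H
  | ReflectF _ => 1%g
  end.

Lemma tilde_inj (L : nat) (u : {perm 'I_L}) :
  injective (fun i : 'I_L => rev_ord (u (rev_ord i))).
Proof. move=> i j /= /rev_ord_inj /perm_inj; exact: rev_ord_inj. Qed.

(* tilde u (i) = L+1 - u(L+1-i)  (0-indexed: rev_ord (u (rev_ord i))) *)
Definition tilde (L : nat) (u : {perm 'I_L}) : {perm 'I_L} := perm (@tilde_inj L u).

Definition setA (b L : nat) : {set {perm 'I_L}} :=
  [set s : {perm 'I_L} | [forall x, #|porbit s x| <= b]].

(* B: no j >= 0, j+b < i <= L with t(j+k) > t(i) for all k in 1..b.
   0-indexed: positions j..j+b-1 and i with j+b <= i < L. *)
Definition setB (b L : nat) : {set {perm 'I_L}} :=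
  [set t : {perm 'I_L} | ~~ [exists j : 'I_L, exists i : 'I_L,
      (j + b <= i) && [forall k : 'I_L, (j <= k < j + b) ==> (t i < t k)]]].

From mathcomp Require Import all_boot all_fingroup.
From mathcomp Require Import zify.
Set Implicit Arguments. Unset Strict Implicit. Unset Printing Implicit Defensive.

(* The Foata word F(s) is the concatenation of the
   cycles of s, each written from its largest element, by increasing heads.
   Read as a sequence of numbers it is a "record block word": every block starts
   with its strict maximum and the heads increase, so the heads are exactly the
   left-to-right maxima of the word.  Three facts about such words do all the work:
   - the block decomposition is determined by the word (so F is injective);
   - if all blocks have length <= b, every window of b consecutive letters
     contains a left-to-right maximum, hence no letter dominates a later window
     of b letters;
   - if some block is longer than b, its head dominates the b letters after it.
   Reversing both positions and values (u |-> tilde u) turns "some letter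
   dominates a later window of b letters" into the pattern excluded by B.  Hence
   s |-> tilde (F s) is an injection of S_L with (tilde (F s) \in B) = (s \in A),
   and a finite counting argument makes it a bijection from A onto B. *)

Fixpoint record_blocks (m : nat) (bs : seq (seq nat)) : bool :=
  match bs with
  | [::] => true
  | [::] :: _ => false
  | (h :: r) :: bs' => [&& m <= h, all (fun x => x < h) r & record_blocks h.+1 bs']
  end.

Definition dominated_window (b : nat) (w : seq nat) : Prop :=
  exists q p, [/\ q < p, p + b <= size w & forall k, p <= k < p + b -> nth 0 w k < nth 0 w q].

Lemma nth_cat_size (w1 w2 : seq nat) i : nth 0 (w1 ++ w2) (size w1 + i) = nth 0 w2 i.
Proof. by rewrite nth_cat ltnNge leq_addr /= addKn. Qed.

Lemma record_blocks_head m bs y w : record_blocks m bs -> flatten bs = y :: w -> m <= y.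
Proof. by case: bs => [|[|h r] bs] //= /and3P[mh _ _] [<-]. Qed.

(* A block tail r (all letters below h) is recovered from r ++ w when w starts
   above h: it is the longest prefix below h. *)
Lemma tail_below_uniq h r r' w w' :
  all (fun x => x < h) r -> all (fun x => x < h) r' ->
  (forall y t, w = y :: t -> h < y) -> (forall y t, w' = y :: t -> h < y) ->
  r ++ w = r' ++ w' -> r = r'.
Proof.
elim: r r' => [|x r IH] [|x' r'] //=.
- by move=> _ /andP[hx' _] hw _ E; have := hw _ _ E; lia.
- by move=> /andP[hx _] _ _ hw' E; have := hw' _ _ (esym E); lia.
- by move=> /andP[_ hr] /andP[_ hr'] hw hw' [-> /IH ->].
Qed.

Lemma record_blocks_inj bs bs' m m' :
  record_blocks m bs -> record_blocks m' bs' -> flatten bs = flatten bs' -> bs = bs'.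
Proof.
elim: bs m m' bs' => [|[|h r] bs IH] m m' [|[|h' r'] bs'] //=.
move=> /and3P[_ hr Pbs] /and3P[_ hr' Pbs'] [eh E]; subst h'.
have er : r = r'.
  apply: (tail_below_uniq hr hr' _ _ E) => y t.
  + exact: record_blocks_head Pbs.
  + exact: record_blocks_head Pbs'.
move: E; rewrite er => /(congr1 (drop (size r'))); rewrite !drop_size_cat // => E.
by rewrite (IH _ _ _ Pbs Pbs' E).
Qed.

(* If all blocks have length <= b, every position p has a left-to-right maximum
   h with h <= p < h + b (namely the head of the block containing p). *)
Lemma short_blocks_record b bs m p :
  record_blocks m bs -> all (fun bl => size bl <= b) bs -> p < size (flatten bs) ->
  exists h, [/\ h <= p < h + b, m <= nth 0 (flatten bs) h &
    forall x, x < h -> nth 0 (flatten bs) x < nth 0 (flatten bs) h].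
Proof.
elim: bs m p => [|[|c r] bs IH] m p //= /and3P[mc hr Pbs] /andP[sz szs] hp.
rewrite -cat_cons; case: (ltnP p (size (c :: r))) => hpr.
  by exists 0; split => //=; move: sz hpr => /=; lia.
have hp' : p - size (c :: r) < size (flatten bs) by move: hp hpr; rewrite /= size_cat; lia.
have [h [h_p h_m h_rec]] := IH _ _ Pbs szs hp'.
exists (size (c :: r) + h); rewrite nth_cat_size; split.
- by move: h_p hpr => /=; lia.
- by apply: leq_trans h_m; apply: leq_trans mc _.
move=> x hx; rewrite nth_cat; case: ifP => hxs.
  have : nth 0 (c :: r) x \in c :: r by exact: mem_nth.
  rewrite inE => /predU1P[->|/(allP hr) /ltnW hxc]; first exact: leq_trans h_m.
  by apply: leq_trans h_m; rewrite ltnS.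
by apply: h_rec; move: hx hxs => /=; lia.
Qed.

(* Hence with blocks of length <= b no letter dominates a later window of b
   letters: the window contains a left-to-right maximum. *)
Lemma small_blocks_no_window b bs m : 0 < b ->
  record_blocks m bs -> all (fun bl => size bl <= b) bs -> ~ dominated_window b (flatten bs).
Proof.
move=> b_gt0 Pbs szs [q [p [qp pb win]]].
have last_in : p + b - 1 < size (flatten bs) by lia.
have [h [/andP[h_p h_b] _ h_rec]] := short_blocks_record Pbs szs last_in.
have := win h; have := h_rec q; lia.
Qed.

(* Conversely, the head of a block of length > b dominates the b letters that
   follow it. *)
Lemma long_block_window b bs m :
  record_blocks m bs -> has (fun bl => b < size bl) bs -> dominated_window b (flatten bs).
Proof.
elim: bs m => [|[|c r] bs IH] m //= /and3P[_ hr Pbs] /orP[long|].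
  exists 0, 1; split => //; first by rewrite /= size_cat; move: long => /=; lia.
  move=> [|k] // /andP[_ hk] /=; rewrite nth_cat ifT; last by move: long => /=; lia.
  by apply: (allP hr); apply: mem_nth; move: long => /=; lia.
move=> /(IH _ Pbs) [q [p [qp pb win]]].
exists (size (c :: r) + q), (size (c :: r) + p); rewrite -cat_cons; split.
- by rewrite ltn_add2l.
- by rewrite size_cat -addnA leq_add2l.
move=> k hk; have -> : k = size (c :: r) + (k - size (c :: r)) by lia.
by rewrite !nth_cat_size; apply: win; lia.
Qed.

Section FoataWord.
Variable L : nat.
Implicit Types s : {perm 'I_L}.

Definition cycle_word s (c : 'I_L) : seq 'I_L := traject s c #|porbit s c|.

Definition foata_blocks s : seq (seq nat) :=
  [seq map val (cycle_word s c) | c <- cycle_heads s].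

Lemma foata_wordE s : foata_word s = flatten [seq cycle_word s c | c <- cycle_heads s].
Proof. by []. Qed.

Lemma cycle_headP s c : reflect {in porbit s c, forall y : 'I_L, y <= c} (c \in cycle_heads s).
Proof.
rewrite /cycle_heads mem_filter mem_enum andbT.
by apply: (iffP forallP) => H y; [move=> hy; have := H y; rewrite hy | apply/implyP/H].
Qed.

Lemma cycle_word_porbit s c : cycle_word s c =i porbit s c.
Proof. by move=> x; rewrite /cycle_word porbit_traject. Qed.

Lemma cycle_wordE s c :
  exists n, cycle_word s c = c :: traject s (s c) n /\ #|porbit s c| = n.+1.
Proof.
rewrite /cycle_word; have := card_porbit_neq0 s c.
by case: #|porbit s c| => // n _; exists n.
Qed.

Lemma same_cycle_head s c c' y : c \in cycle_heads s -> c' \in cycle_heads s ->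
  y \in porbit s c -> y \in porbit s c' -> c = c'.
Proof.
move=> /cycle_headP hc /cycle_headP hc'.
rewrite -!eq_porbit_mem => /eqP yc /eqP yc'.
have hc'c : c' \in porbit s c by rewrite -yc yc' porbit_id.
have hcc' : c \in porbit s c' by rewrite -yc' yc porbit_id.
by apply: val_inj; apply/eqP; rewrite eqn_leq hc // hc'.
Qed.

Lemma head_cycle_word s c : c \in cycle_heads s ->
  exists2 r, cycle_word s c = c :: r & all (fun x => val x < val c) r.
Proof.
move=> hc; have [n [E _]] := cycle_wordE s c; exists (traject s (s c) n) => //.
have : uniq (cycle_word s c) by exact: uniq_traject_porbit.
rewrite E /= => /andP[c_notin _]; apply/allP => x hx.
have x_orb : x \in porbit s c by rewrite -cycle_word_porbit E inE hx orbT.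
rewrite ltn_neqAle (cycle_headP _ _ hc x x_orb) andbT.
by apply/negP => /eqP/val_inj exc; move: hx; rewrite exc (negbTE c_notin).
Qed.

Lemma cycle_heads_sorted s : sorted (relpre val ltn) (cycle_heads s).
Proof.
apply: sorted_filter; first by move=> a b c /=; apply: ltn_trans.
by rewrite -sorted_map val_enum_ord iota_ltn_sorted.
Qed.

Lemma heads_record_blocks s cs m :
  sorted (relpre val ltn) cs -> all (fun c : 'I_L => m <= c) cs ->
  {subset cs <= cycle_heads s} -> record_blocks m [seq map val (cycle_word s c) | c <- cs].
Proof.
elim: cs m => [|c cs IH] m //= hs /andP[mc hm] hsub.
have [r -> hr] := head_cycle_word (hsub c (mem_head _ _)).
rewrite /= mc all_map /=; apply/andP; split; first exact: hr.
apply: IH; first exact: path_sorted hs.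
- by apply: order_path_min hs => a b d /=; apply: ltn_trans.
- by move=> x hx; apply: hsub; rewrite inE hx orbT.
Qed.

Lemma foata_blocks_record s : record_blocks 0 (foata_blocks s).
Proof. by apply: heads_record_blocks; [exact: cycle_heads_sorted | apply/allP |]. Qed.

Lemma exists_cycle_head s x : exists2 c, c \in cycle_heads s & x \in porbit s c.
Proof.
have [c hc hmax] := @arg_maxnP _ x (mem (porbit s x)) val (porbit_id s x).
have E : porbit s c = porbit s x by apply/eqP; rewrite eq_porbit_mem.
exists c; last by rewrite porbit_sym.
by apply/cycle_headP => y; rewrite E; apply: hmax.
Qed.

(* The Foata word has no repeated letter, as distinct heads have disjoint cycles. *)
Lemma foata_word_uniq s : uniq (foata_word s).
Proof.
rewrite foata_wordE.
have : uniq (cycle_heads s) by rewrite filter_uniq ?enum_uniq.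
have : {subset cycle_heads s <= cycle_heads s} by [].
elim: {-2}(cycle_heads s) => //= c cs IH hsub /andP[c_notin cs_uniq].
rewrite cat_uniq uniq_traject_porbit IH ?andbT //=; last first.
  by move=> z hz; apply: hsub; rewrite inE hz orbT.
apply/hasP => -[y /flatten_mapP[c' hc' hy] hyc].
rewrite cycle_word_porbit in hy; rewrite /= -/(cycle_word s c) cycle_word_porbit in hyc.
have c'_in : c' \in c :: cs by rewrite inE hc' orbT.
by rewrite (same_cycle_head (hsub _ (mem_head _ _)) (hsub _ c'_in) hyc hy) hc' in c_notin.
Qed.

Lemma foata_word_mem s x : x \in foata_word s.
Proof.
have [c hc hx] := exists_cycle_head s x.
by rewrite foata_wordE; apply/flatten_mapP; exists c; rewrite ?cycle_word_porbit.
Qed.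

Lemma foata_word_size s : size (foata_word s) = L.
Proof.
rewrite -[RHS](size_enum_ord L); apply/perm_size/uniq_perm.
- exact: foata_word_uniq.
- exact: enum_uniq.
- by move=> x; rewrite foata_word_mem mem_enum.
Qed.

(* So the word read as a function is injective, i.e. [foata] never uses its
   fallback branch. *)
Lemma foata_fun_inj s : injective (foata_fun s).
Proof.
move=> i j; rewrite /foata_fun => E.
have hi : i < size (foata_word s) by rewrite foata_word_size.
have hj : j < size (foata_word s) by rewrite foata_word_size.
rewrite (set_nth_default j i hi) in E.
by apply: val_inj; apply/eqP; rewrite -(nth_uniq j hi hj (foata_word_uniq s)) E.
Qed.

Lemma foata_blocksE s : flatten (foata_blocks s) = map val (foata_word s).
Proof. by rewrite foata_wordE map_flatten -map_comp. Qed.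

Lemma foata_val s (i : 'I_L) : val (foata s i) = nth 0 (flatten (foata_blocks s)) i.
Proof.
have -> : foata s i = foata_fun s i.
  by rewrite /foata; case: injectiveP => [H|[]]; [rewrite permE | exact: foata_fun_inj].
by rewrite foata_blocksE /foata_fun (nth_map i) ?foata_word_size.
Qed.

Lemma foata_blocks_size s : size (flatten (foata_blocks s)) = L.
Proof. by rewrite foata_blocksE size_map foata_word_size. Qed.

Lemma cycle_word_next s c x : x \in cycle_word s c -> s x = next (cycle_word s c) x.
Proof.
move=> hx; suff C : fcycle s (cycle_word s c) by have /eqP := next_cycle C hx.
have [n [E hn]] := cycle_wordE s c.
have back : iter n.+1 s c = c by rewrite -hn iter_porbit.
by rewrite E /= -[X in rcons _ X]back iterSr -trajectSr fpath_traject.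
Qed.

Lemma foata_blocks_inj : injective foata_blocks.
Proof.
move=> s s' E; apply/permP => x.
have words_eq : [seq cycle_word s c | c <- cycle_heads s] =
    [seq cycle_word s' c | c <- cycle_heads s'].
  by apply: (inj_map (inj_map val_inj)); rewrite -!map_comp.
have /flatten_mapP[c hc hx] := foata_word_mem s x.
have /mapP[c' _ Ec] : cycle_word s c \in [seq cycle_word s' c' | c' <- cycle_heads s'].
  by rewrite -words_eq map_f.
by rewrite (cycle_word_next hx) Ec -cycle_word_next // -Ec.
Qed.

(* F is injective: F(s) determines the blocks, and the blocks determine s. *)
Lemma foata_inj : injective (@foata L).
Proof.
move=> s s' E; apply: foata_blocks_inj.
apply: (record_blocks_inj (foata_blocks_record s) (foata_blocks_record s')).
apply: (@eq_from_nth _ 0) => [|i]; first by rewrite !foata_blocks_size.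
by rewrite foata_blocks_size => hi; rewrite -!(foata_val _ (Ordinal hi)) E.
Qed.

Lemma setA_blocks b s : (s \in setA b L) = all (fun bl => size bl <= b) (foata_blocks s).
Proof.
have size_block c : size (map val (cycle_word s c)) = #|porbit s c|.
  by rewrite size_map size_traject.
rewrite inE; apply/forallP/allP => [H _ /mapP[c _ ->] | H x].
  by rewrite size_block.
have [c hc hxc] := exists_cycle_head s x.
have /eqP -> : porbit s x == porbit s c by rewrite eq_porbit_mem.
by rewrite -size_block H //; apply/mapP; exists c.
Qed.

End FoataWord.

(* Reversing positions and values: tilde u contains the pattern excluded by B
   iff the word of u has a letter dominating a later window of b letters. *)
Lemma tilde_notin_setB b L (u : {perm 'I_L}) (w : seq nat) :
  size w = L -> (forall i : 'I_L, val (u i) = nth 0 w i) ->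
  tilde u \notin setB b L <-> dominated_window b w.
Proof.
move=> w_size uw.
have tildeE k : val (tilde u k) = L - (nth 0 w (L - k.+1)).+1.
  by rewrite /tilde permE /= uw.
have w_lt x : x < L -> nth 0 w x < L.
  by move=> hx; rewrite -(uw (Ordinal hx)); apply: ltn_ord.
rewrite inE negbK; split.
  case/existsP => j /existsP[i /andP[ji /forallP win]].
  have i_lt := ltn_ord i; have j_lt := ltn_ord j.
  exists (L - i.+1), (L - (j + b)); split; rewrite ?w_size; [lia | lia |].
  move=> k hk; have k_lt : L - k.+1 < L by lia.
  have in_win : j <= L - k.+1 < j + b by lia.
  have := implyP (win (Ordinal k_lt)) in_win; rewrite !tildeE /=.
  have -> : L - (L - k.+1).+1 = k by lia.
  by have := w_lt k; have := w_lt (L - i.+1); lia.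
move=> [q [p [qp pb win]]]; rewrite w_size in pb.
have i_lt : L - q.+1 < L by lia.
have j_lt : L - (p + b) < L by lia.
apply/existsP; exists (Ordinal j_lt); apply/existsP; exists (Ordinal i_lt).
rewrite /= (_ : L - (p + b) + b <= L - q.+1); last by lia.
apply/forallP => k; apply/implyP => /andP[k_lo k_hi]; rewrite !tildeE /=.
have -> : L - (L - q.+1).+1 = q by lia.
have k_lt := ltn_ord k; have := win (L - k.+1); have := w_lt q; have := w_lt (L - k.+1).
lia.
Qed.

Lemma tildeK L : involutive (@tilde L).
Proof. by move=> u; apply/permP => i; rewrite /tilde !permE /= !rev_ordK. Qed.

Lemma bij_from_preimage (T : finType) (A B : {set T}) (f : T -> T) :
  injective f -> (forall x, (f x \in B) = (x \in A)) ->
  [/\ {in A, forall x, f x \in B}, {in A &, injective f},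
      (forall y, y \in B -> exists2 x, x \in A & f x = y) & #|A| = #|B|].
Proof.
move=> f_inj fAB.
have onto y : y \in B -> exists2 x, x \in A & f x = y.
  have /codomP[x ->] := inj_card_onto f_inj (leqnn _) y.
  by rewrite fAB; exists x.
split=> // [x | x x' _ _ /f_inj //|]; first by rewrite fAB.
rewrite -(card_imset A f_inj); apply: eq_card => y.
by apply/imsetP/idP => [[x xA ->] | /onto[x xA <-]]; [rewrite fAB | exists x].
Qed.

Theorem mainTheorem2 (b L : nat) (hb : 1 <= b) (hL : 1 <= L) :
  [/\ {in setA b L, forall s, tilde (foata s) \in setB b L},
      {in setA b L &, injective (fun s => tilde (foata s))},
      (forall t, t \in setB b L -> exists2 s, s \in setA b L & tilde (foata s) = t)
    & #|setA b L| = #|setB b L|].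
Proof.
apply: bij_from_preimage => [s s' /(can_inj (@tildeK L)) /foata_inj // | s].
have window_iff := tilde_notin_setB b (foata_blocks_size s) (foata_val s).
rewrite setA_blocks; apply/idP/idP => [inB | small].
  apply/allP => bl bl_in; rewrite leqNgt; apply/negP => long.
  have /window_iff : dominated_window b (flatten (foata_blocks s)).
    by apply: long_block_window (foata_blocks_record s) _; apply/hasP; exists bl.
  by rewrite inB.
apply/negPn/negP => /window_iff.
exact: small_blocks_no_window hb (foata_blocks_record s) small.
Qed.
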